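(* Let $q$ be a prime power, let $\gamma\in\mathbb{F}_q^*$ have multiplicative order $l$, and let $D=\langle\gamma\rangle=\{1,\gamma,\dots,\gamma^{l-1}\}$. Let $G=\mathbb{F}_q\rtimes\mathbb{Z}_l$ be the group on the set $\mathbb{F}_q\times\mathbb{Z}_l$ with multiplication $(x,i)(y,j)=(x+\gamma^i y,\ i+j)$. Let $D'\subseteq\mathbb{F}_q$ satisfy $dD'=D'$ for all $d\in D$, let $u\in\mathbb{F}_q^*$, let $S=\{-u+x: x\in D'\}$, $s=|S|$, and $E=\{(x,i): x\in S,\ i\in\mathbb{Z}_l\}\subseteq G$. Suppose $0\notin S$ and that there are integers $\alpha,\beta$ such that for every $y\in\mathbb{F}_q$, $$\#\{(x,d)\in D'\times D:\ x-ud=y\}=\beta+\alpha\,[y=0]$$ (equivalently, in the group ring $\mathbb{Z}[(\mathbb{F}_q,+)]$, $\underline{D'}\,\underline{uD}^{-1}=\alpha\mathbf{1}+\beta\,\underline{\mathbb{F}_q}$). Then the Cayley digraph $\mathrm{Cay}(G,E)$ is a directed strongly regular graph with parameters $(lq,\ ls,\ \beta s,\ \beta s+\alpha,\ \beta s)$.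
   Context: For a group $G$ and $E\subseteq G$ not containing the identity, the Cayley digraph $\mathrm{Cay}(G,E)$ has vertex set $G$ and an arc $g\to h$ iff $g^{-1}h\in E$. $[y=0]$ is $1$ if $y=0$ and $0$ otherwise. In the group ring notation, $\underline{X}=\sum_{x\in X}x$ and $\underline{X}^{-1}=\sum_{x\in X}x^{-1}$ (here the group is additive, so $x^{-1}=-x$). A directed strongly regular graph with parameters $(v,k,t,\lambda,\mu)$ is a digraph (no loops, no multiple arcs) on $v$ vertices whose adjacency matrix $A$ satisfies $A^2=tI+\lambda A+\mu(J-I-A)$ and $AJ=JA=kJ$. *)

From HB Require Import structures.
From mathcomp Require Import all_boot all_order all_algebra all_field.
Set Implicit Arguments. Unset Strict Implicit. Unset Printing Implicit Defensive.
Import Order.TTheory GRing.Theory Num.Theory.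
Local Open Scope ring_scope.

(* Z_l represented by 'I_l with addition mod l (works for every l >= 1). *)
Lemma ord_pos (l : nat) (i : 'I_l) : (0 < l)%N.
Proof. exact: leq_ltn_trans (leq0n i) (ltn_ord i). Qed.

Definition zadd (l : nat) (i j : 'I_l) : 'I_l :=
  Ordinal (ltn_pmod (i + j) (ord_pos i)).
Definition zopp (l : nat) (i : 'I_l) : 'I_l :=
  Ordinal (ltn_pmod (l - i) (ord_pos i)).

Definition sdmul (F : fieldType) (l : nat) (gamma : F) (g h : F * 'I_l)
  : F * 'I_l := (g.1 + gamma ^+ g.2 * h.1, zadd g.2 h.2).
Definition sdinv (F : fieldType) (l : nat) (gamma : F) (g : F * 'I_l)
  : F * 'I_l := (- ((gamma ^+ g.2)^-1 * g.1), zopp g.2).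

Definition cay_arc (F : finFieldType) (l : nat) (gamma : F)
  (E : {set F * 'I_l}) : rel (F * 'I_l) :=
  fun g h => sdmul gamma (sdinv gamma g) h \in E.

Definition adjmx (T : finType) (r : rel T) : 'M[int]_#|T| :=
  \matrix_(i, j) (r (enum_val i) (enum_val j))%:R.

Definition dsrg (T : finType) (r : rel T) (v k : nat) (t lam mu : int) : Prop :=
  let A := adjmx r in
  let J := const_mx 1 : 'M[int]_#|T| in
  [/\ #|T| = v,
      forall x, ~~ r x x,
      A *m A = t *: 1%:M + lam *: A + mu *: (J - 1%:M - A),
      A *m J = (k%:Z) *: J &
      J *m A = (k%:Z) *: J].

From HB Require Import structures.
From mathcomp Require Import all_boot all_order all_algebra all_field.
From mathcomp Require Import ring.
Set Implicit Arguments. Unset Strict Implicit. Unset Printing Implicit Defensive.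
Import Order.TTheory GRing.Theory Num.Theory.
Local Open Scope ring_scope.

(* An arc (x,i) -> (y,j) of Cay(G,E) means gamma^-i (y - x) \in S, independently
   of j.  Hence the number of 2-walks from (x,i) to (y,j) is
   sum_z [gamma^-i (z - x) \in S] * c (y - z), where c w = #{k | gamma^k w \in S}.
   Using d D' = D' to move gamma^k from w onto u, c w is the number of
   representations of w as x - u d with x \in D', d \in D, i.e. beta + alpha [w = 0].
   So the walk count is beta s + alpha [arc], the DSRG identity with
   t = mu = beta s and lambda = beta s + alpha; the degrees are l s because each
   z |-> c (z - x) with c != 0 is a bijection of F_q. *)

Lemma natr_card (R : pzSemiRingType) (T : finType) (A : {pred T}) :
  #|A|%:R = \sum_t (t \in A)%:R :> R.
Proof.
by rewrite -sum1_card natr_sum big_mkcond; apply: eq_bigr => t _; case: (t \in A).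
Qed.

Lemma natr_card_in (R : pzSemiRingType) (T : finType) (A : {pred T}) (P : pred T) :
  #|[set t in A | P t]|%:R = \sum_(t in A) (P t)%:R :> R.
Proof.
rewrite natr_card [RHS]big_mkcond; apply: eq_bigr => t _.
by rewrite inE; case: (t \in A).
Qed.

Lemma mem_addl_imset (V : finZmodType) (A : {set V}) (u w : V) :
  (w \in [set - u + x | x in A]) = (u + w \in A).
Proof.
apply/imsetP/idP => [[x xA ->] | uwA]; first by rewrite addNKr.
by exists (u + w); rewrite ?addKr.
Qed.

Lemma card_diff_pairs (R : finPzRingType) (A B : {set R}) (c y : R) :
  #|[set p : R * R | (p.1 \in A) && (p.2 \in B) && (p.1 - c * p.2 == y)]|
    = #|[set d in B | y + c * d \in A]|.
Proof.
rewrite -(card_imset _ (f := fun d => (y + c * d, d))) => [|d e [_ ->] //].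
apply: eq_card => -[a d]; rewrite inE /=; apply/idP/imsetP.
  by move=> /andP[/andP[aA dB] /eqP <-]; exists d; rewrite ?inE ?subrK ?dB.
by case=> e; rewrite inE => /andP[eB eA] [-> ->]; rewrite eA eB addrK eqxx.
Qed.

Lemma sum_pair (V : nmodType) (I J : finType) (f : I * J -> V) :
  \sum_p f p = \sum_i \sum_j f (i, j).
Proof. by rewrite pair_bigA; apply: eq_bigr => -[]. Qed.

Lemma zoppK (l : nat) : involutive (@zopp l).
Proof.
move=> i; apply: val_inj => /=; have lt_il := ltn_ord i.
have [i0 | i_gt0] := posnP i.
  by rewrite i0 subn0 modnn subn0 modnn.
have lt_il' : (l - i < l)%N by rewrite ltn_subrL i_gt0 (ltn_trans i_gt0 lt_il).
by rewrite (modn_small lt_il') subKn ?modn_small // ltnW.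
Qed.

Lemma sum_affine_mem (R : pzSemiRingType) (F : finFieldType) (S : {pred F}) (c x : F) :
  c != 0 -> \sum_z (c * (z - x) \in S)%:R = #|S|%:R :> R.
Proof.
move=> c0; rewrite natr_card (reindex_inj (h := fun a => x + c^-1 * a)) /=.
  by apply: eq_bigr => a _; rewrite addrC addKr mulVKf.
by move=> a b /addrI /(mulfI (invr_neq0 c0)).
Qed.

Section AdjacencyMatrix.

Variables (T : finType) (r : rel T).

Lemma dsrg_of_walk_counts (v k : nat) (t lam mu : int) :
  #|T| = v -> (forall x, ~~ r x x) ->
  (forall x y, \sum_w (r x w)%:R * (r w y)%:R
      = t * (x == y)%:R + lam * (r x y)%:R + mu * (1 - (x == y)%:R - (r x y)%:R)) ->
  (forall x, \sum_w (r x w)%:R = k%:Z) ->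
  (forall y, \sum_w (r w y)%:R = k%:Z) ->
  dsrg r v k t lam mu.
Proof.
have sum_enum (f : T -> int) : \sum_(i < #|T|) f (enum_val i) = \sum_w f w.
  by rewrite (reindex enum_val (onW_bij _ (@enum_val_bij T))).
move=> cardT irr walks outdeg indeg; split=> //; apply/matrixP => i j; rewrite !mxE.
- under eq_bigr => ? _ do rewrite !mxE.
  rewrite (sum_enum (fun w => (r (enum_val i) w)%:R * (r w (enum_val j))%:R)).
  by rewrite walks (inj_eq enum_val_inj).
- under eq_bigr => ? _ do rewrite !mxE mulr1.
  by rewrite (sum_enum (fun w => (r (enum_val i) w)%:R)) outdeg mulr1.
- under eq_bigr => ? _ do rewrite !mxE mul1r.
  by rewrite (sum_enum (fun w => (r w (enum_val j))%:R)) indeg mulr1.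
Qed.

End AdjacencyMatrix.

Section PrimitiveRootPowers.

Variables (F : fieldType) (l : nat) (gamma : F).
Hypothesis gamma_prim : l.-primitive_root gamma.

Lemma prim_root_neq0 : gamma != 0.
Proof. by rewrite (prim_root_eq0 gamma_prim) -lt0n (prim_order_gt0 gamma_prim). Qed.

Lemma prim_expr_neq0 n : gamma ^+ n != 0.
Proof. exact: expf_neq0 prim_root_neq0. Qed.

Lemma prim_expr_zopp (i : 'I_l) : gamma ^+ zopp i = (gamma ^+ i)^-1.
Proof.
rewrite /= (prim_expr_mod gamma_prim) expfB_cond ?(negbTE prim_root_neq0).
  by rewrite (prim_expr_order gamma_prim) div1r.
by rewrite add0n ltnW.
Qed.

Lemma prim_expr_inj : injective (fun i : 'I_l => gamma ^+ i).
Proof.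
move=> i j /eqP; rewrite (eq_prim_root_expr gamma_prim) !modn_small //.
by move/eqP/val_inj.
Qed.

Lemma sum_prim_exprV (V : nmodType) (f : F -> V) :
  \sum_(i < l) f (gamma ^+ i)^-1 = \sum_(i < l) f (gamma ^+ i).
Proof.
rewrite [RHS](reindex_inj (can_inj (@zoppK l))).
by apply: eq_bigr => i _; rewrite prim_expr_zopp.
Qed.

End PrimitiveRootPowers.

Section CayleyDigraph.

Variables (F : finFieldType) (l : nat) (gamma : F) (S : {set F}).
Hypothesis gamma_prim : l.-primitive_root gamma.

Local Notation arc := (cay_arc gamma [set g : F * 'I_l | g.1 \in S]).

Lemma cay_arcE x y : arc x y = ((gamma ^+ x.2)^-1 * (y.1 - x.1) \in S).
Proof. by rewrite /cay_arc /sdmul /sdinv inE /= prim_expr_zopp // mulrBr addrC. Qed.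

Lemma cay_outdegree x : \sum_w (arc x w)%:R = (l * #|S|)%:R :> int.
Proof.
rewrite sum_pair; under eq_bigr => z _ do under eq_bigr => i _ do rewrite cay_arcE /=.
under eq_bigr => z _ do rewrite sumr_const card_ord.
rewrite sumrMnl sum_affine_mem ?invr_neq0 ?(prim_expr_neq0 gamma_prim) //.
by rewrite mulnC natrM mulr_natr.
Qed.

Lemma cay_indegree y : \sum_w (arc w y)%:R = (l * #|S|)%:R :> int.
Proof.
rewrite sum_pair exchange_big /=.
under eq_bigr => i _ do under eq_bigr => z _ do rewrite cay_arcE /= -opprB mulrN -mulNr.
under eq_bigr => i _ do rewrite sum_affine_mem ?oppr_eq0 ?invr_neq0 ?(prim_expr_neq0 gamma_prim) //.
by rewrite sumr_const card_ord mulnC natrM mulr_natr.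
Qed.

Variables alpha beta : int.
Hypothesis S_orbit_count :
  forall w, \sum_(i < l) (gamma ^+ i * w \in S)%:R = beta + alpha * (w == 0)%:R.

Lemma cay_walk2_count x y :
  \sum_w (arc x w)%:R * (arc w y)%:R = beta * #|S|%:R + alpha * (arc x y)%:R.
Proof.
rewrite sum_pair.
under eq_bigr => z _ do under eq_bigr => i _ do rewrite !cay_arcE /=.
under eq_bigr => z _ do
  rewrite -mulr_sumr (sum_prim_exprV gamma_prim (fun c => (c * (y.1 - z) \in S)%:R)).
under eq_bigr => z _ do rewrite S_orbit_count mulrDr subr_eq0.
rewrite big_split /= -mulr_suml sum_affine_mem ?invr_neq0 ?(prim_expr_neq0 gamma_prim) //.
rewrite (bigD1 y.1) //= eqxx big1 ?addr0; last first.
  by move=> z; rewrite eq_sym => /negbTE ->; rewrite !mulr0.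
by rewrite mulr1n mulr1 cay_arcE mulrC [alpha * _]mulrC.
Qed.

Lemma cay_dsrg : 0 \notin S ->
  dsrg arc (l * #|F|) (l * #|S|)
    (beta * #|S|%:Z) (beta * #|S|%:Z + alpha) (beta * #|S|%:Z).
Proof.
move=> S0; apply: dsrg_of_walk_counts.
- by rewrite card_prod card_ord mulnC.
- by move=> x; rewrite cay_arcE subrr mulr0.
- by move=> x y; rewrite cay_walk2_count natz; ring.
- by move=> x; rewrite cay_outdegree natz.
- by move=> y; rewrite cay_indegree natz.
Qed.

End CayleyDigraph.

Section DifferenceCount.

Variables (F : finFieldType) (l : nat) (gamma : F) (D' : {set F}) (u : F).
Variables alpha beta : int.
Hypothesis gamma_prim : l.-primitive_root gamma.

Local Notation D := [set gamma ^+ i | i : 'I_l].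

Hypothesis D'_invariant : forall d, d \in D -> [set d * x | x in D'] = D'.
Hypothesis diff_count : forall y : F,
  (#|[set p : F * F | (p.1 \in D') && (p.2 \in D) && (p.1 - u * p.2 == y)]| : int)
    = beta + alpha * (y == 0)%:R.

Lemma prim_expr_mulr_mem (i : 'I_l) v : (gamma ^+ i * v \in D') = (v \in D').
Proof.
have gamma_iD : gamma ^+ i \in D by apply: imset_f.
rewrite -{1}(D'_invariant gamma_iD).
by apply/imsetP/idP => [[x xD' /(mulfI (prim_expr_neq0 gamma_prim i)) ->] | vD']; last exists v.
Qed.

Lemma orbit_count_shifted_set w :
  \sum_(i < l) (gamma ^+ i * w \in [set - u + x | x in D'])%:R = beta + alpha * (w == 0)%:R.
Proof.
rewrite -diff_count card_diff_pairs -natz natr_card_in big_imset /=; last first.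
  by move=> i j _ _; apply: prim_expr_inj.
rewrite -(sum_prim_exprV gamma_prim (fun d => (w + u * d \in D')%:R)).
apply: eq_bigr => i _; rewrite mem_addl_imset -[in RHS](prim_expr_mulr_mem i).
by rewrite mulrDr mulrCA mulfV ?(prim_expr_neq0 gamma_prim) // mulr1 addrC.
Qed.

End DifferenceCount.

Theorem lemma4p1 (F : finFieldType) (l : nat) (gamma : F)
  (Hgamma : l.-primitive_root gamma)
  (D' : {set F}) (u : F) (alpha beta : int) :
  let D := [set gamma ^+ i | i : 'I_l] in
  let S := [set - u + x | x in D'] in
  let s := #|S| in
  let E := [set g : F * 'I_l | g.1 \in S] in
  (forall d, d \in D -> [set d * x | x in D'] = D') ->
  u != 0 ->
  0 \notin S ->
  (forall y : F,
     (#|[set p : F * F | (p.1 \in D') && (p.2 \in D) && (p.1 - u * p.2 == y)]| : int)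
       = beta + alpha * (y == 0)%:R) ->
  dsrg (cay_arc gamma E) (l * #|F|) (l * s)
       (beta * s%:Z) (beta * s%:Z + alpha) (beta * s%:Z).
Proof.
move=> D S s E D'_invariant _ S0 diff_count.
by apply: cay_dsrg => //; apply: orbit_count_shifted_set.
Qed.
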